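(* Let $n\ge 2$ be an integer such that $C_n=n2^n+1$ is composite and $\phi(C_n)\mid C_n-1$. Let $k$ be the number of distinct prime factors of $C_n$. Then $k<1+2.4\log n$, where $\log$ is the natural logarithm.
   Context: $\phi$ denotes Euler's totient function, and $C_n=n2^n+1$. *)

From mathcomp Require Import all_boot.
From Stdlib Require Import Reals.

Definition cullen (n : nat) : nat := (n * 2 ^ n + 1)%N.

From mathcomp Require Import all_boot zify.
From Stdlib Require Import Reals Lra.

(* Every prime p dividing C_n is odd, and p - 1 divides phi(C_n), hence n 2^n.
   Write p - 1 = 2^e u with u odd.  The primes with u >= 3 each contribute a
   factor >= 3 to the odd part of n 2^n, which is at most n: there are at most
   log_3 n of them.  The others are Fermat primes 2^(2^j) + 1 with distinct j
   and sum of 2^j at most the 2-adic valuation of n 2^n, which is < 2n: there are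
   at most log_2 (2n) of them.  Finally log_2 (2n) + log_3 n < 1 + 2.4 log n. *)

(* Importing Reals rebinds [^] on nat to [Nat.pow], in which [cullen] is written. *)
Local Notation "m ^ n" := (expn m n) : nat_scope.

Lemma natpowE m k : Nat.pow m k = m ^ k.
Proof. by elim: k => //= k IHk; rewrite expnS IHk multE. Qed.

Lemma dvdn_exp_odd_addn1 x k : x.+1 %| x ^ k.*2.+1 + 1.
Proof.
case: x => [|x]; first exact: dvd1n.
have sq : x.+1 ^ 2 = 1 %[mod x.+2].
  by rewrite (_ : x.+1 ^ 2 = x * x.+2 + 1) ?modnMDl // expnS expn1; lia.
by rewrite /dvdn expnS -mul2n expnM -modnDml -modnMmr -modnXm sq modnXm exp1n
  muln1 modnDml addn1 modnn.
Qed.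

Lemma prime_exp2_addn1_pow2 a : 0 < a -> prime (2 ^ a + 1) -> a = 2 ^ logn 2 a.
Proof.
move=> a_gt0 pr_a.
have [m m_odd def_a] := pfactor_coprime (isT : prime 2) a_gt0.
rewrite coprime2n in m_odd.
set x := 2 ^ 2 ^ logn 2 a.
have x_gt1 : 1 < x by rewrite -(exp1n (2 ^ logn 2 a)) ltn_exp2r ?expn_gt0.
have def_2a : 2 ^ a = x ^ m by rewrite def_a mulnC expnM.
have x1_dvd : x.+1 %| 2 ^ a + 1.
  by rewrite def_2a -(odd_double_half m) m_odd add1n dvdn_exp_odd_addn1.
have /eqP : x.+1 = 2 ^ a + 1.
  by apply/(prime_nt_dvdP pr_a) => //; rewrite eqSS -lt0n ltnW.
rewrite addn1 eqSS def_2a -{1}(expn1 x) eqn_exp2l // => /eqP m1.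
by rewrite {1}def_a -m1 mul1n.
Qed.

Lemma logn_prod (p : nat) (I : eqType) (r : seq I) (F : I -> nat) :
  {in r, forall i, 0 < F i} -> logn p (\prod_(i <- r) F i) = \sum_(i <- r) logn p (F i).
Proof.
elim: r => [|i r IHr] F_gt0; first by rewrite !big_nil logn1.
have F_gt0' : {in r, forall j, 0 < F j} by move=> j j_r; rewrite F_gt0 // mem_behead.
rewrite !big_cons lognM ?IHr ?F_gt0 ?mem_head //.
by rewrite big_seq prodn_cond_gt0.
Qed.

Lemma partn_prod pi (I : eqType) (r : seq I) (F : I -> nat) :
  {in r, forall i, 0 < F i} -> (\prod_(i <- r) F i)`_pi = \prod_(i <- r) (F i)`_pi.
Proof.
elim: r => [|i r IHr] F_gt0; first by rewrite !big_nil partn1.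
have F_gt0' : {in r, forall j, 0 < F j} by move=> j j_r; rewrite F_gt0 // mem_behead.
rewrite !big_cons partnM ?IHr ?F_gt0 ?mem_head //.
by rewrite big_seq prodn_cond_gt0.
Qed.

Lemma exp3_count_le_prod (I : eqType) (r : seq I) (F : I -> nat) :
  {in r, forall i, odd (F i)} -> 3 ^ count (fun i => F i != 1) r <= \prod_(i <- r) F i.
Proof.
elim: r => [|i r IHr] F_odd; first by rewrite big_nil.
rewrite big_cons /= expnD leq_mul ?IHr //; last first.
  by move=> j j_r; rewrite F_odd // mem_behead.
have := F_odd i (mem_head _ _).
by case: (F i) => [|[|[|k]]].
Qed.

Lemma sorted_exp2_size_le (t : seq nat) m : all (leq m) t -> sorted ltn t ->
  2 ^ m * 2 ^ size t <= \sum_(y <- t) 2 ^ y + 2 ^ m.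
Proof.
elim: t m => [|x t IHt] m /=; first by rewrite big_nil muln1.
case/andP=> le_mx _ t_sorted.
have t_gt : all (leq m.+1) t.
  by apply: sub_all (order_path_min ltn_trans t_sorted) => y; apply: leq_ltn_trans.
rewrite expnS mulnA (mulnC _ 2) -expnS.
apply: leq_trans (IHt m.+1 t_gt (path_sorted t_sorted)) _.
by rewrite big_cons expnS mul2n -addnn addnA leq_add2r addnC leq_add2r leq_exp2l.
Qed.

Lemma uniq_exp2_size_le (s : seq nat) : uniq s -> 2 ^ size s <= (\sum_(y <- s) 2 ^ y).+1.
Proof.
move=> s_uniq.
have s_perm : perm_eq (sort leq s) s by rewrite perm_sort perm_refl.
have s_sorted : sorted ltn (sort leq s).
  rewrite ltn_sorted_uniq_leq (perm_uniq s_perm) s_uniq sort_sorted //.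
  exact: leq_total.
have := @sorted_exp2_size_le _ 0 _ s_sorted.
by rewrite size_sort (perm_big _ s_perm) mul1n addn1; apply; apply/allP.
Qed.

Definition pow2_succ (p : nat) : bool := (p.-1)`_2^' == 1.

Lemma pow2_succ_prime p : prime p -> 2 < p -> pow2_succ p ->
  p.-1 = 2 ^ 2 ^ logn 2 (logn 2 p.-1).
Proof.
move=> p_pr p_gt2 /eqP p1_odd1.
have p1_gt1 : 1 < p.-1 by rewrite -ltnS prednK ?prime_gt0.
have def_p1 : p.-1 = 2 ^ logn 2 p.-1.
  by rewrite -{1}(partnC 2 (ltnW p1_gt1)) p1_odd1 muln1 p_part.
rewrite -(@prime_exp2_addn1_pow2 (logn 2 p.-1)) //.
  by rewrite lt0n; apply: contraTneq p1_gt1 => e0; rewrite def_p1 e0.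
by rewrite -def_p1 addn1 prednK ?prime_gt0.
Qed.

Section PredPrimesProduct.

Variables (P : seq nat) (m : nat).
Hypotheses (P_uniq : uniq P) (P_odd_prime : {in P, forall p, prime p /\ 2 < p}).
Hypotheses (m_gt0 : 0 < m) (prod_dvd : \prod_(p <- P) p.-1 %| m).

Let predP_gt0 : {in P, forall p, 0 < p.-1}.
Proof. by move=> p /P_odd_prime[_ p_gt2]; rewrite -ltnS prednK // ltnW // ltnW. Qed.

Lemma exp2_count_pow2_succ_le : 2 ^ count pow2_succ P <= (logn 2 m).+1.
Proof.
pose js := [seq logn 2 (logn 2 p.-1) | p <- P & pow2_succ p].
have def_p1 p : p \in P -> pow2_succ p -> p.-1 = 2 ^ 2 ^ logn 2 (logn 2 p.-1).
  by move=> /P_odd_prime[p_pr p_gt2]; apply: pow2_succ_prime.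
have js_uniq : uniq js.
  rewrite map_inj_in_uniq ?filter_uniq // => p q.
  rewrite !mem_filter => /andP[Fp Pp] /andP[Fq Pq] eq_pq.
  have /(congr1 succn) : p.-1 = q.-1.
    by rewrite (def_p1 p Pp Fp) (def_p1 q Pq Fq) eq_pq.
  by rewrite !prednK ?prime_gt0 ?(P_odd_prime _ Pp).1 ?(P_odd_prime _ Pq).1.
have js_sum : \sum_(j <- js) 2 ^ j <= logn 2 m.
  rewrite big_map big_filter.
  apply: leq_trans (dvdn_leq_log 2 m_gt0 prod_dvd).
  rewrite logn_prod // [X in _ <= X](bigID pow2_succ) /= big_seq_cond.
  rewrite [X in _ <= X + _]big_seq_cond; apply: leq_trans (leq_addr _ _).
  apply: eq_leq; apply: eq_bigr => p /andP[Pp Fp].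
  by rewrite {2}(def_p1 p Pp Fp) pfactorK.
have := uniq_exp2_size_le _ js_uniq.
rewrite size_map size_filter => /leq_trans; apply.
by rewrite ltnS.
Qed.

Lemma exp3_count_not_pow2_succ_le : 3 ^ count (predC pow2_succ) P <= m`_2^'.
Proof.
apply: (@leq_trans (\prod_(p <- P) (p.-1)`_2^')).
  by apply: exp3_count_le_prod => p _; rewrite odd_2'nat part_pnat.
rewrite -partn_prod //; apply: dvdn_leq; first exact: part_gt0.
exact: partn_dvd.
Qed.

End PredPrimesProduct.

Section LogBound.
Local Open Scope R_scope.

Lemma ln_le x y : 0 < x -> x <= y -> ln x <= ln y.
Proof. by move=> x_gt0 [/(ln_increasing _ _ x_gt0)/Rlt_le | ->] //; apply: Rle_refl. Qed.

Lemma ln2_gt : 17/25 < ln 2.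
Proof.
have ln_ge : 1/50 <= ln (50/49).
  rewrite -[1/50]ln_exp; apply: ln_le; first exact: exp_pos.
  have := exp_ineq1_le (- (1/50)).
  have : exp (1/50) * exp (- (1/50)) = 1 by rewrite -exp_plus Rplus_opp_r exp_0.
  have := exp_pos (1/50); nra.
have ratio_pow_lt : (50/49) ^ 34 < 2.
  have : 50 ^ 34 < 2 * 49 ^ 34 by rewrite !pow_IZR -mult_IZR; apply: IZR_lt.
  have : (50/49) ^ 34 * 49 ^ 34 = 50 ^ 34.
    by rewrite -Rpow_mult_distr; congr (_ ^ _); field.
  have : 0 < 49 ^ 34 by apply: pow_lt; lra.
  nra.
apply: Rle_lt_trans (ln_increasing _ _ _ ratio_pow_lt); last by apply: pow_lt; lra.
rewrite ln_pow; last by lra.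
simpl INR; lra.
Qed.

Lemma ln2_ln3 : 19 * ln 2 < 12 * ln 3.
Proof.
have -> : 19 * ln 2 = ln (2 ^ 19) by rewrite ln_pow; [simpl; lra | lra].
have -> : 12 * ln 3 = ln (3 ^ 12) by rewrite ln_pow; [simpl; lra | lra].
apply: ln_increasing; first by apply: pow_lt; lra.
by rewrite !pow_IZR; apply: IZR_lt.
Qed.

End LogBound.

Lemma INR_expn m k : INR (m ^ k) = (INR m ^ k)%R.
Proof. by rewrite -natpowE pow_INR. Qed.

Lemma addn_lt_ln_bound n r s : 1 < n -> 2 ^ r <= n.*2 -> 3 ^ s <= n ->
  (INR (r + s) < 1 + 24/10 * ln (INR n))%R.
Proof.
move=> /ltP/lt_INR n_gt1 /leP/le_INR exp2_le /leP/le_INR exp3_le.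
change (INR 1) with 1%R in n_gt1.
have INR2 : INR 2 = 2%R by simpl; lra.
have INR3 : INR 3 = 3%R by simpl; lra.
rewrite INR_expn -mul2n -multE mult_INR INR2 in exp2_le.
rewrite INR_expn INR3 in exp3_le.
rewrite plus_INR.
set L := ln (INR n).
have L_gt0 : (0 < L)%R by rewrite -ln_1; apply: ln_increasing => //; lra.
have r_le : (INR r * ln 2 <= ln 2 + L)%R.
  rewrite -ln_pow -?ln_mult; try lra.
  by apply: ln_le => //; apply: pow_lt; lra.
have s_le : (INR s * ln 3 <= L)%R.
  by rewrite -ln_pow; [apply: ln_le => //; apply: pow_lt | ]; lra.
(* 1/ln 2 + 1/ln 3 < 31/(19 ln 2) < 2.4 *)
have ln2_gt0 : (0 < ln 2)%R by have := ln2_gt; lra.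
have sum_le : (19 * ln 2 * (INR r + INR s) <= 19 * ln 2 + 31 * L)%R.
  have := Rmult_le_compat_r _ _ _ (pos_INR s) (Rlt_le _ _ ln2_ln3); lra.
have L_lt : (31 * L < 19 * ln 2 * (24/10) * L)%R by have := ln2_gt; nra.
apply: (Rmult_lt_reg_l (19 * ln 2)); lra.
Qed.

Lemma cullen_pred n : (cullen n).-1 = n * 2 ^ n.
Proof. by rewrite /cullen natpowE addn1. Qed.

Lemma odd_cullen n : 0 < n -> odd (cullen n).
Proof.
by move=> n_gt0; rewrite /cullen natpowE addn1 /= oddM oddX orbF eqn0Ngt n_gt0 andbF.
Qed.

Lemma prod_pred_primes_dvdn_totient N :
  0 < N -> \prod_(p <- primes N) p.-1 %| totient N.
Proof. by move=> N_gt0; rewrite totientE // big_split dvdn_mulr. Qed.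

Theorem mainTheorem3 (n : nat) :
  (2 <= n)%N ->
  (1 < cullen n)%N -> ~~ prime (cullen n) ->
  (totient (cullen n) %| (cullen n).-1)%N ->
  (INR (size (primes (cullen n))) < 1 + (24 / 10) * ln (INR n))%R.
Proof.
move=> n_ge2 _ _ tot_dvd; have n_gt0 : 0 < n by apply: ltnW.
set P := primes (cullen n).
have P_odd_prime : {in P, forall p, prime p /\ 2 < p}.
  move=> p; rewrite mem_primes => /and3P[p_pr _ p_dvd]; split=> //.
  exact: odd_prime_gt2 (dvdn_odd p_dvd (odd_cullen _ n_gt0)) p_pr.
have prod_dvd : \prod_(p <- P) p.-1 %| n * 2 ^ n.
  rewrite -cullen_pred; apply: dvdn_trans tot_dvd.
  by apply: prod_pred_primes_dvdn_totient; rewrite /cullen addn1.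
have n2n_gt0 : 0 < n * 2 ^ n by rewrite muln_gt0 n_gt0 expn_gt0.
rewrite -(count_predC pow2_succ) /=.
apply: addn_lt_ln_bound => //.
- have P_uniq : uniq P := primes_uniq _.
  apply: leq_trans (exp2_count_pow2_succ_le _ _ P_uniq P_odd_prime n2n_gt0 prod_dvd) _.
  by rewrite lognM ?expn_gt0 // pfactorK // -addSn -addnn leq_add2r ltn_logl.
- apply: leq_trans (exp3_count_not_pow2_succ_le _ _ P_odd_prime n2n_gt0 prod_dvd) _.
  rewrite partnM ?expn_gt0 // partnX (@part_p'nat 2^' 2) ?pnatNK ?pnat_id // exp1n muln1.
  exact: dvdn_leq n_gt0 (dvdn_part _ _).
Qed.
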